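(* For every integer $m\ge0$ and every $z\in\mathfrak U$, the $2m$-th derivative satisfies $T^{(2m)}(z)\neq0$.
   Context: Let $V_0<V_1<\dots<V_n$ be real, $\beta_1,\dots,\beta_n\in[-1,1]$, $\beta_0:=-1$, $\beta_{n+1}:=1$, with $\beta_i\ne\beta_{i+1}$ for all $0\le i\le n$. Define $$T(z)=\sum_{i=0}^n\tfrac12(\beta_{i+1}-\beta_i)\frac1{z-e^{V_i}}$$ and $$\mathfrak U=(-\infty,e^{V_0})\cup(e^{V_n},\infty)\cup\bigcup_{1\le i\le n,\ \beta_i=\pm1}(e^{V_{i-1}},e^{V_i}).$$ *)

From Stdlib Require Import Reals.
From Coquelicot Require Import Coquelicot.
Open Scope R_scope.

Definition beta_ext (n : nat) (beta : nat -> R) (i : nat) : R :=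
  if Nat.eqb i 0 then -1 else if Nat.eqb i (S n) then 1 else beta i.

Definition Tfun (n : nat) (V beta : nat -> R) (z : R) : R :=
  sum_f_R0 (fun i => / 2 * (beta_ext n beta (S i) - beta_ext n beta i)
                       / (z - exp (V i))) n.

Definition in_U (n : nat) (V beta : nat -> R) (z : R) : Prop :=
  z < exp (V 0%nat) \/ exp (V n) < z \/
  exists i : nat, (1 <= i <= n)%nat /\ (beta i = 1 \/ beta i = -1) /\
    exp (V (i - 1)%nat) < z < exp (V i).

(* Away from the poles e^{V_i}, T^{(2m)}(z) = (2m)! sum_i c_i s_i with the jumps
   c_i = (beta_{i+1} - beta_i)/2 of the extended sequence beta (so sum_i c_i = 1) and
   s_i = (z - e^{V_i})^{-(2m+1)}.  As t |-> t^{-(2m+1)} decreases on each half-line,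
   s_i < s_{i+1} whenever z lies outside [e^{V_i}, e^{V_{i+1}}].  Summation by parts
   then gives sum_i c_i s_i >= s_0 > 0 when z is right of all poles or in a gap with
   beta_k = 1 (the one place where monotonicity fails carries the weight beta_k - 1 = 0),
   and symmetrically sum_i c_i s_i <= s_n < 0 when z is left of all poles or in a gap
   with beta_k = -1. *)

From Stdlib Require Import Reals Lra Lia Factorial.
From Coquelicot Require Import Coquelicot.
Open Scope R_scope.

Lemma is_derive_pole_power (a : R) k x : x <> a ->
  is_derive (fun y => (-1) ^ k * INR (fact k) / (y - a) ^ S k) x
    ((-1) ^ S k * INR (fact (S k)) / (x - a) ^ S (S k)).
Proof.
  intros Hx.
  assert (Hxa : x - a <> 0) by lra.
  pose proof (pow_nonzero _ k Hxa) as Hxak.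
  auto_derive; [exact (pow_nonzero _ (S k) Hxa)|].
  change (match k with 0%nat => 1 | S _ => INR k + 1 end) with (INR (S k)).
  rewrite fact_simpl, mult_INR, S_INR, <- !tech_pow_Rmult.
  unfold Rminus in *; field; auto.
Qed.

Lemma locally_avoids (a : nat -> R) n x :
  (forall i, (i <= n)%nat -> x <> a i) ->
  locally x (fun y => forall i, (i <= n)%nat -> y <> a i).
Proof.
  induction n as [|n IH]; intros Hx.
  - apply (locally_open _ _ (open_neq (a 0%nat))); [|apply Hx; lia].
    intros y Hy i Hi; replace i with 0%nat by lia; exact Hy.
  - apply (filter_imp (fun y => (forall i, (i <= n)%nat -> y <> a i) /\ y <> a (S n))).
    + intros y [Hy Hyn] i Hi.
      destruct (Nat.eq_dec i (S n)) as [->|Hne]; [exact Hyn|apply Hy; lia].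
    + apply filter_and; [apply IH; intros; apply Hx; lia|].
      apply (locally_open _ _ (open_neq (a (S n)))); [easy|apply Hx; lia].
Qed.

Lemma Derive_n_partial_fractions (c a : nat -> R) n k x :
  (forall i, (i <= n)%nat -> x <> a i) ->
  Derive_n (fun y => sum_f_R0 (fun i => c i / (y - a i)) n) k x
  = sum_f_R0 (fun i => c i * ((-1) ^ k * INR (fact k) / (x - a i) ^ S k)) n.
Proof.
  revert x; induction k as [|k IH]; intros x Hx.
  - apply sum_eq; intros i Hi.
    assert (x - a i <> 0) by (specialize (Hx i Hi); lra).
    simpl; field; auto.
  - cbn [Derive_n]; rewrite (Derive_ext_loc _
      (fun y => sum_f_R0 (fun i => c i * ((-1) ^ k * INR (fact k) / (y - a i) ^ S k)) n)).
    + apply is_derive_unique; rewrite <- sum_n_Reals.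
      apply (is_derive_ext (fun y => sum_n (fun i => c i * ((-1) ^ k * INR (fact k) / (y - a i) ^ S k)) n)).
      { intros y; apply sum_n_Reals. }
      apply (is_derive_sum_n (fun i y => c i * ((-1) ^ k * INR (fact k) / (y - a i) ^ S k)));
        intros i Hi.
      apply is_derive_scal, is_derive_pole_power, Hx, Hi.
    + apply (filter_imp _ _ IH), locally_avoids, Hx.
Qed.

Lemma pow_lt_compat_l x y k : 0 <= x < y -> (0 < k)%nat -> x ^ k < y ^ k.
Proof.
  intros [Hx Hxy] Hk; induction Hk as [|k Hk IH]; simpl; [lra|].
  assert (x ^ k <= y ^ k) by (apply pow_incr; lra).
  assert (0 <= x ^ k) by (apply pow_le; lra).
  nra.
Qed.

Lemma pow_odd_opp x m : (- x) ^ S (2 * m) = - x ^ S (2 * m).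
Proof.
  rewrite <- !tech_pow_Rmult, !pow_mult.
  replace ((- x) ^ 2) with (x ^ 2) by ring; ring.
Qed.

Lemma inv_pow_odd_lt_contravar x y m : x < y -> 0 < x * y ->
  / y ^ S (2 * m) < / x ^ S (2 * m).
Proof.
  intros Hxy Hprod.
  assert (Hpos : 0 < x ^ S (2 * m) * y ^ S (2 * m))
    by (rewrite <- Rpow_mult_distr; apply pow_lt; lra).
  apply Rinv_lt_contravar; [exact Hpos|].
  destruct (Rlt_or_le 0 x) as [Hx|Hx].
  - apply pow_lt_compat_l; [lra|lia].
  - assert (Hneg : (- y) ^ S (2 * m) < (- x) ^ S (2 * m))
      by (apply pow_lt_compat_l; [nra|lia]).
    rewrite !pow_odd_opp in Hneg; lra.
Qed.

Lemma inv_pow_odd_pole_lt (u v z : R) m : u < v -> z < u \/ v < z ->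
  / (z - u) ^ S (2 * m) < / (z - v) ^ S (2 * m).
Proof. intros Huv Hz; apply inv_pow_odd_lt_contravar; nra. Qed.

Definition jump_sum (b s : nat -> R) (n : nat) : R :=
  sum_f_R0 (fun i => / 2 * (b (S i) - b i) * s i) n.

Section JumpSums.

Variables (b s : nat -> R).
Hypothesis b_first : b 0%nat = -1.

Lemma jump_sum_ge n :
  (forall j, (j < n)%nat -> 0 <= (b (S j) - 1) * (s j - s (S j))) ->
  s 0%nat + (b (S n) - 1) / 2 * s n <= jump_sum b s n.
Proof.
  unfold jump_sum; induction n as [|n IH]; intros Hj; simpl.
  - rewrite b_first; lra.
  - assert (IHn : s 0%nat + (b (S n) - 1) / 2 * s n
                    <= sum_f_R0 (fun i => / 2 * (b (S i) - b i) * s i) n)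
      by (apply IH; intros; apply Hj; lia).
    specialize (Hj n (Nat.lt_succ_diag_r n)); lra.
Qed.

Lemma jump_sum_le n :
  (forall j, (j < n)%nat -> (b (S j) + 1) * (s j - s (S j)) <= 0) ->
  jump_sum b s n <= (b (S n) + 1) / 2 * s n.
Proof.
  unfold jump_sum; induction n as [|n IH]; intros Hj; simpl.
  - rewrite b_first; lra.
  - assert (IHn : sum_f_R0 (fun i => / 2 * (b (S i) - b i) * s i) n
                    <= (b (S n) + 1) / 2 * s n)
      by (apply IH; intros; apply Hj; lia).
    specialize (Hj n (Nat.lt_succ_diag_r n)); lra.
Qed.

End JumpSums.

Section PoleSums.

Variables (a b : nat -> R) (n m : nat) (z : R).
Hypothesis a_incr : forall j, (j < n)%nat -> a j < a (S j).
Hypothesis b_first : b 0%nat = -1.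
Hypothesis b_last : b (S n) = 1.

Lemma jump_sum_poles_pos :
  (forall j, (j < n)%nat -> b (S j) <= 1) -> a 0%nat < z ->
  (forall j, (j < n)%nat -> b (S j) = 1 \/ z < a j \/ a (S j) < z) ->
  0 < jump_sum b (fun i => / (z - a i) ^ S (2 * m)) n.
Proof.
  intros b_le Hz Hj.
  assert (Hs0 : 0 < / (z - a 0%nat) ^ S (2 * m))
    by (apply Rinv_0_lt_compat, pow_lt; lra).
  assert (Hchain : forall j, (j < n)%nat ->
            0 <= (b (S j) - 1) * (/ (z - a j) ^ S (2 * m) - / (z - a (S j)) ^ S (2 * m))).
  { intros j Hjn; specialize (b_le j Hjn).
    destruct (Hj j Hjn) as [Hb|Hout]; [rewrite Hb; lra|].
    pose proof (inv_pow_odd_pole_lt _ _ _ m (a_incr j Hjn) Hout); nra. }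
  pose proof (jump_sum_ge _ _ b_first n Hchain) as Hsum.
  rewrite b_last in Hsum; lra.
Qed.

Lemma jump_sum_poles_neg :
  (forall j, (j < n)%nat -> -1 <= b (S j)) -> z < a n ->
  (forall j, (j < n)%nat -> b (S j) = -1 \/ z < a j \/ a (S j) < z) ->
  jump_sum b (fun i => / (z - a i) ^ S (2 * m)) n < 0.
Proof.
  intros b_ge Hz Hj.
  assert (Hsn : / (z - a n) ^ S (2 * m) < 0).
  { rewrite <- (Ropp_involutive (z - a n)), pow_odd_opp, Rinv_opp.
    apply Ropp_lt_gt_0_contravar, Rinv_0_lt_compat, pow_lt; lra. }
  assert (Hchain : forall j, (j < n)%nat ->
            (b (S j) + 1) * (/ (z - a j) ^ S (2 * m) - / (z - a (S j)) ^ S (2 * m)) <= 0).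
  { intros j Hjn; specialize (b_ge j Hjn).
    destruct (Hj j Hjn) as [Hb|Hout]; [rewrite Hb; lra|].
    pose proof (inv_pow_odd_pole_lt _ _ _ m (a_incr j Hjn) Hout); nra. }
  pose proof (jump_sum_le _ _ b_first n Hchain) as Hsum.
  rewrite b_last in Hsum; lra.
Qed.

End PoleSums.

Lemma beta_ext_last n beta : beta_ext n beta (S n) = 1.
Proof. unfold beta_ext; simpl; now rewrite Nat.eqb_refl. Qed.

Lemma beta_ext_inner n beta j : (j < n)%nat -> beta_ext n beta (S j) = beta (S j).
Proof. intros Hj; unfold beta_ext; simpl; now rewrite (proj2 (Nat.eqb_neq j n)) by lia. Qed.

Section Increasing.

Variables (a : nat -> R) (n : nat).
Hypothesis a_incr : forall i, (i < n)%nat -> a i < a (S i).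

Lemma incr_le i j : (i <= j <= n)%nat -> a i <= a j.
Proof.
  intros [Hij Hjn]; induction Hij as [|j Hij IH]; [lra|].
  specialize (a_incr j Hjn); specialize (IH ltac:(lia)); lra.
Qed.

Lemma gap_separates k z : (1 <= k <= n)%nat -> a (k - 1) < z < a k ->
  forall j, (j < n)%nat -> S j = k \/ z < a j \/ a (S j) < z.
Proof.
  intros Hk Hz j Hj.
  destruct (Nat.lt_total (S j) k) as [Hlt|[Heq|Hgt]]; [right; right|now left|right; left].
  - pose proof (incr_le (S j) (k - 1) ltac:(lia)); lra.
  - pose proof (incr_le k j ltac:(lia)); lra.
Qed.

End Increasing.

Section DomainU.

Variables (n : nat) (V beta : nat -> R) (z : R).
Hypothesis hV : forall i, (i < n)%nat -> V i < V (S i).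
Hypothesis hz : in_U n V beta z.

Let exp_V_incr i : (i < n)%nat -> exp (V i) < exp (V (S i)).
Proof. intros; now apply exp_increasing, hV. Qed.

Lemma in_U_avoids_poles i : (i <= n)%nat -> z <> exp (V i).
Proof.
  intros Hi.
  destruct hz as [Hz|[Hz|(k & Hk & _ & Hz)]].
  - pose proof (incr_le _ _ exp_V_incr 0 i ltac:(lia)); lra.
  - pose proof (incr_le _ _ exp_V_incr i n ltac:(lia)); lra.
  - destruct (Nat.le_gt_cases i (k - 1)).
    + pose proof (incr_le _ _ exp_V_incr i (k - 1) ltac:(lia)); lra.
    + pose proof (incr_le _ _ exp_V_incr k i ltac:(lia)); lra.
Qed.

Lemma in_U_cases :
  (exp (V 0%nat) < z /\ forall j, (j < n)%nat ->
     beta_ext n beta (S j) = 1 \/ z < exp (V j) \/ exp (V (S j)) < z) \/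
  (z < exp (V n) /\ forall j, (j < n)%nat ->
     beta_ext n beta (S j) = -1 \/ z < exp (V j) \/ exp (V (S j)) < z).
Proof.
  destruct hz as [Hz|[Hz|(k & Hk & Hbk & Hz)]].
  - right; split; [pose proof (incr_le _ _ exp_V_incr 0 n ltac:(lia)); lra|].
    intros j Hj; right; left.
    pose proof (incr_le _ _ exp_V_incr 0 j ltac:(lia)); lra.
  - left; split; [pose proof (incr_le _ _ exp_V_incr 0 n ltac:(lia)); lra|].
    intros j Hj; right; right.
    pose proof (incr_le _ _ exp_V_incr (S j) n ltac:(lia)); lra.
  - assert (Hsep := gap_separates _ _ exp_V_incr _ _ Hk Hz).
    assert (Hjump : forall j, (j < n)%nat ->
              beta_ext n beta (S j) = beta k \/ z < exp (V j) \/ exp (V (S j)) < z).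
    { intros j Hj; destruct (Hsep j Hj) as [<-|Hout]; [left|now right].
      now apply beta_ext_inner. }
    destruct Hbk as [Hbk|Hbk]; rewrite Hbk in Hjump; [left|right]; split; auto.
    + pose proof (incr_le _ _ exp_V_incr 0 (k - 1) ltac:(lia)); lra.
    + pose proof (incr_le _ _ exp_V_incr k n ltac:(lia)); lra.
Qed.

End DomainU.

Theorem lemma4p2 (n : nat) (V beta : nat -> R)
  (hV : forall i : nat, (i < n)%nat -> V i < V (S i))
  (hbeta : forall i : nat, (1 <= i <= n)%nat -> -1 <= beta i <= 1)
  (hneq : forall i : nat, (i <= n)%nat -> beta_ext n beta i <> beta_ext n beta (S i))
  (m : nat) (z : R) (hz : in_U n V beta z) :
  Derive_n (Tfun n V beta) (2 * m) z <> 0.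
Proof.
  set (a := fun i => exp (V i)); set (b := beta_ext n beta).
  change (Tfun n V beta)
    with (fun y => sum_f_R0 (fun i => / 2 * (b (S i) - b i) / (y - a i)) n).
  rewrite Derive_n_partial_fractions by exact (in_U_avoids_poles n V beta z hV hz).
  assert (Hderiv :
    sum_f_R0 (fun i => / 2 * (b (S i) - b i)
                * ((-1) ^ (2 * m) * INR (fact (2 * m)) / (z - a i) ^ S (2 * m))) n
    = INR (fact (2 * m)) * jump_sum b (fun i => / (z - a i) ^ S (2 * m)) n).
  { unfold jump_sum; rewrite scal_sum; apply sum_eq; intros i _.
    rewrite pow_mult; replace ((-1) ^ 2) with 1 by ring; rewrite pow1.
    unfold Rdiv; ring. }
  rewrite Hderiv; apply Rmult_integral_contrapositive_currified; [apply INR_fact_neq_0|].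
  assert (Ha : forall j, (j < n)%nat -> a j < a (S j))
    by (intros; now apply exp_increasing, hV).
  assert (Hb : forall j, (j < n)%nat -> -1 <= b (S j) <= 1)
    by (intros j Hj; unfold b; rewrite beta_ext_inner by exact Hj; apply hbeta; lia).
  destruct (in_U_cases n V beta z hV hz) as [[Hz Hj]|[Hz Hj]].
  - apply Rgt_not_eq, (jump_sum_poles_pos a b n m z Ha eq_refl (beta_ext_last n beta)
      (fun j Hj' => proj2 (Hb j Hj')) Hz Hj).
  - apply Rlt_not_eq, (jump_sum_poles_neg a b n m z Ha eq_refl (beta_ext_last n beta)
      (fun j Hj' => proj1 (Hb j Hj')) Hz Hj).
Qed.
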